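(* Let $I$ be an index set and $P_r,Q_r\in GL(n,\mathbb R)$ for $r\in I$. There exists a $C^1$-diffeomorphism (respectively, a real-analytic diffeomorphism with real-analytic inverse) $f\colon\mathbb R^n\to\mathbb R^n$ with $f(P_rx)=Q_rf(x)$ for all $x\in\mathbb R^n$, $r\in I$, if and only if there exists $C\in GL(n,\mathbb R)$ with $CP_r=Q_rC$ for all $r\in I$. *)

From Stdlib Require Import Reals.
From mathcomp Require Import all_boot.
Set Implicit Arguments.
Local Open Scope R_scope. Unset Strict Implicit. Unset Printing Implicit Defensive.

Definition vec (n : nat) := 'I_n -> R.
Definition mat (n : nat) := 'I_n -> 'I_n -> R.

Definition vadd n (x y : vec n) : vec n := fun i => (x i + y i).
Definition vsub n (x y : vec n) : vec n := fun i => (x i - y i).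

Definition mulmv n (A : mat n) (x : vec n) : vec n :=
  fun i => \big[Rplus/0]_(j < n) (A i j * x j).
Definition mulmm n (A B : mat n) : mat n :=
  fun i k => \big[Rplus/0]_(j < n) (A i j * B j k).
Definition idmat n : mat n := fun i j => if i == j then 1 else 0.

Definition invertible n (A : mat n) : Prop :=
  exists B : mat n, mulmm A B = @idmat n /\ mulmm B A = @idmat n.

(* sup norm on R^n (all norms on R^n are equivalent) *)
Definition vnorm n (x : vec n) : R := \big[Rmax/0]_(i < n) Rabs (x i).

Definition frechet_at n (f : vec n -> vec n) (x : vec n) (L : mat n) : Prop :=
  forall eps : R, (0 < eps) -> exists delta : R, (0 < delta) /\
    forall h : vec n, (vnorm h < delta) ->
      (vnorm (vsub (vsub (f (vadd x h)) (f x)) (mulmv L h)) <= eps * vnorm h).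

Definition C1 n (f : vec n -> vec n) : Prop :=
  exists Df : vec n -> mat n,
    (forall x, frechet_at f x (Df x)) /\
    (forall x eps, (0 < eps) -> exists delta : R, (0 < delta) /\
       forall y, (vnorm (vsub y x) < delta) ->
         forall i j, (Rabs (Df y i j - Df x i j) < eps)).

(* Multivariate power series: partial sums over multi-indices of total
   degree <= K.  The term for multi-index a is  c a * (x - x0)^a. *)
Definition monom n (a : 'I_n -> nat) (y : vec n) : R :=
  \big[Rmult/1]_(i < n) (y i ^ a i).

Definition psum n (c : ('I_n -> nat) -> vec n) (x0 x : vec n) (K : nat) (i : 'I_n) : R :=
  \big[Rplus/0]_(a : {ffun 'I_n -> 'I_K.+1} | (\sum_(k < n) nat_of_ord (a k) <= K)%N)
     (c (fun k => nat_of_ord (a k)) i * monom (fun k => nat_of_ord (a k)) (vsub x x0)).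

Definition psum_abs n (c : ('I_n -> nat) -> vec n) (x0 x : vec n) (K : nat) (i : 'I_n) : R :=
  \big[Rplus/0]_(a : {ffun 'I_n -> 'I_K.+1} | (\sum_(k < n) nat_of_ord (a k) <= K)%N)
     (Rabs (c (fun k => nat_of_ord (a k)) i * monom (fun k => nat_of_ord (a k)) (vsub x x0))).

(* f is real-analytic: near every point x0 it equals an absolutely
   convergent power series centred at x0 *)
Definition analytic n (f : vec n -> vec n) : Prop :=
  forall x0 : vec n, exists (r : R) (c : ('I_n -> nat) -> vec n), (0 < r) /\
    forall x : vec n, (vnorm (vsub x x0) < r) -> forall i : 'I_n,
      Un_cv (fun K => psum c x0 x K i) (f x i) /\
      bound (fun y => exists K, y = psum_abs c x0 x K i).

Definition C1_diffeo n (f : vec n -> vec n) : Prop :=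
  exists g : vec n -> vec n,
    (forall x, g (f x) = x) /\ (forall y, f (g y) = y) /\ C1 f /\ C1 g.

Definition analytic_diffeo n (f : vec n -> vec n) : Prop :=
  exists g : vec n -> vec n,
    (forall x, g (f x) = x) /\ (forall y, f (g y) = y) /\ analytic f /\ analytic g.

(* Every P_r fixes the origin, so differentiating f (P_r x) = Q_r (f x) at 0 by the chain rule
   gives Df(0) P_r = Q_r Df(0); and Df(0) is invertible because f has a differentiable inverse.
   Real-analytic maps are differentiable, since beyond its linear term a convergent power series
   is dominated by a multiple of |x - x0|^2.  Conversely x |-> C x is itself a C^1 and an
   analytic diffeomorphism. *)
From HB Require Import structures.
From Stdlib Require Import Reals Lra Lia FunctionalExtensionality Classical.
From mathcomp Require Import all_boot.
Set Implicit Arguments. Unset Strict Implicit. Unset Printing Implicit Defensive.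
Local Open Scope R_scope.

HB.instance Definition _ := Monoid.isComLaw.Build R 0 Rplus
  (fun x y z => esym (Rplus_assoc x y z)) Rplus_comm Rplus_0_l.
HB.instance Definition _ := Monoid.isComLaw.Build R 1 Rmult
  (fun x y z => esym (Rmult_assoc x y z)) Rmult_comm Rmult_1_l.

Section RealSums.
Variables (I : Type) (s : seq I) (P : pred I).

Lemma Rabs_sum_le (F : I -> R) :
  Rabs (\big[Rplus/0]_(i <- s | P i) F i) <= \big[Rplus/0]_(i <- s | P i) Rabs (F i).
Proof.
elim/big_rec2: _ => [|i y1 y2 _ H]; first by rewrite Rabs_R0; lra.
apply: Rle_trans (Rabs_triang _ _) _; lra.
Qed.

Lemma sum_le (F G : I -> R) :
  (forall i, P i -> F i <= G i) ->
  \big[Rplus/0]_(i <- s | P i) F i <= \big[Rplus/0]_(i <- s | P i) G i.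
Proof.
move=> FG; elim/big_rec2: _ => [|i y1 y2 Pi Hy]; first lra.
have := FG i Pi; lra.
Qed.

Lemma sum_ge0 (F : I -> R) :
  (forall i, P i -> 0 <= F i) -> 0 <= \big[Rplus/0]_(i <- s | P i) F i.
Proof.
move=> F0; elim/big_rec: _ => [|i y Pi Hy]; first lra.
have := F0 i Pi; lra.
Qed.

Lemma sum_mulr (F : I -> R) c :
  \big[Rplus/0]_(i <- s | P i) F i * c = \big[Rplus/0]_(i <- s | P i) (F i * c).
Proof. elim/big_rec2: _ => [|i y1 y2 _ <-]; ring. Qed.

Lemma sum_mull (F : I -> R) c :
  c * \big[Rplus/0]_(i <- s | P i) F i = \big[Rplus/0]_(i <- s | P i) (c * F i).
Proof. elim/big_rec2: _ => [|i y1 y2 _ <-]; ring. Qed.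

Lemma sum_sub (F G : I -> R) :
  \big[Rplus/0]_(i <- s | P i) (F i - G i)
  = \big[Rplus/0]_(i <- s | P i) F i - \big[Rplus/0]_(i <- s | P i) G i.
Proof. elim/big_rec3: _ => [|i y1 y2 y3 _ ->]; ring. Qed.

End RealSums.

Lemma sum_ge_term (I : finType) (F : I -> R) j :
  (forall i, 0 <= F i) -> F j <= \big[Rplus/0]_(i : I) F i.
Proof.
move=> F0; rewrite (bigD1 j) //=.
have := @sum_ge0 _ (index_enum I) (fun i => i != j) F (fun i _ => F0 i); lra.
Qed.

Lemma bigmax_ge0 (I : Type) (s : seq I) (F : I -> R) : 0 <= \big[Rmax/0]_(i <- s) F i.
Proof.
elim/big_rec: _ => [|i y _ Hy]; first lra.
apply: Rle_trans Hy (Rmax_r _ _).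
Qed.

Lemma bigmax_ge (I : eqType) (s : seq I) (F : I -> R) j :
  j \in s -> F j <= \big[Rmax/0]_(i <- s) F i.
Proof.
elim: s => //= a s IH; rewrite in_cons big_cons => /orP [/eqP->|js].
  exact: Rmax_l.
apply: Rle_trans (IH js) (Rmax_r _ _).
Qed.

Section Vectors.
Variable n : nat.
Implicit Types (x y h : vec n) (A B : mat n).

Lemma vnorm_ge0 x : 0 <= vnorm x.
Proof. exact: bigmax_ge0. Qed.

Lemma Rabs_coord_le x i : Rabs (x i) <= vnorm x.
Proof. by apply: (bigmax_ge (fun i => Rabs (x i))); rewrite mem_index_enum. Qed.

Lemma vnorm_le_bound x b : 0 <= b -> (forall i, Rabs (x i) <= b) -> vnorm x <= b.
Proof. by move=> b0 xb; rewrite /vnorm; elim/big_rec: _ => // i y _ Hy; apply: Rmax_lub. Qed.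

Lemma vnorm_add_le x y : vnorm (vadd x y) <= vnorm x + vnorm y.
Proof.
apply: vnorm_le_bound => [|i]; first by have := vnorm_ge0 x; have := vnorm_ge0 y; lra.
apply: Rle_trans (Rabs_triang _ _) _.
have := Rabs_coord_le x i; have := Rabs_coord_le y i; lra.
Qed.

Lemma vnorm_const_le t : 0 <= t -> vnorm (fun _ : 'I_n => t) <= t.
Proof. by move=> t0; apply: vnorm_le_bound => // i; rewrite Rabs_pos_eq; lra. Qed.

Lemma vnorm0 : vnorm (fun _ : 'I_n => 0) = 0.
Proof. by apply: Rle_antisym; [apply: vnorm_const_le; lra | apply: vnorm_ge0]. Qed.

Lemma vsub_vaddK x h : vsub (vadd x h) x = h.
Proof. by apply: functional_extensionality => i; rewrite /vsub /vadd; ring. Qed.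

Lemma vadd_vsubK x y : vadd (vsub x y) y = x.
Proof. by apply: functional_extensionality => i; rewrite /vsub /vadd; ring. Qed.

Lemma vadd_subrK x y : vadd x (vsub y x) = y.
Proof. by apply: functional_extensionality => i; rewrite /vsub /vadd; ring. Qed.

Lemma vaddv0 x : vadd x (fun _ => 0) = x.
Proof. by apply: functional_extensionality => i; rewrite /vadd; ring. Qed.

Definition mnorm A : R := \big[Rplus/0]_(i < n) \big[Rplus/0]_(j < n) Rabs (A i j).

Lemma mnorm_ge0 A : 0 <= mnorm A.
Proof. by apply: sum_ge0 => i _; apply: sum_ge0 => j _; apply: Rabs_pos. Qed.

Lemma vnorm_mulmv_le A h : vnorm (mulmv A h) <= mnorm A * vnorm h.
Proof.
apply: vnorm_le_bound => [|i].
  exact: Rmult_le_pos (mnorm_ge0 A) (vnorm_ge0 h).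
apply: Rle_trans (Rabs_sum_le _ _ _) _.
apply: (@Rle_trans _ (\big[Rplus/0]_(j < n) Rabs (A i j) * vnorm h)).
  rewrite sum_mulr; apply: sum_le => j _; rewrite Rabs_mult.
  exact: Rmult_le_compat_l (Rabs_pos _) (Rabs_coord_le h j).
apply: Rmult_le_compat_r (vnorm_ge0 h) _.
apply: (@sum_ge_term _ (fun i => \big[Rplus/0]_(j < n) Rabs (A i j))) => k.
by apply: sum_ge0 => j _; apply: Rabs_pos.
Qed.

Lemma mulmv_sub A x y : mulmv A (vsub x y) = vsub (mulmv A x) (mulmv A y).
Proof.
apply: functional_extensionality => i; rewrite /mulmv /vsub -sum_sub.
by apply: eq_bigr => j _; ring.
Qed.

Lemma mulmv_mulmm A B h : mulmv (mulmm A B) h = mulmv A (mulmv B h).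
Proof.
apply: functional_extensionality => i; rewrite /mulmv /mulmm.
under eq_bigr => k _ do rewrite sum_mulr.
under [RHS]eq_bigr => j _ do rewrite sum_mull.
by rewrite exchange_big /=; apply: eq_bigr => j _; apply: eq_bigr => k _; ring.
Qed.

Lemma mul1mv x : mulmv (@idmat n) x = x.
Proof.
apply: functional_extensionality => i; rewrite /mulmv /idmat (bigD1 i) //= eqxx big1.
  ring.
by move=> j /negbTE; rewrite eq_sym => ->; ring.
Qed.

Lemma mulmv0 A : mulmv A (fun _ => 0) = (fun _ => 0).
Proof. by apply: functional_extensionality => i; rewrite /mulmv big1 // => j _; ring. Qed.

Definition unitv (k : 'I_n) (t : R) : vec n := fun j => if j == k then t else 0.

Lemma mulmv_unitv A k t i : mulmv A (unitv k t) i = A i k * t.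
Proof.
rewrite /mulmv /unitv (bigD1 k) //= eqxx big1; first ring.
by move=> j /negbTE ->; ring.
Qed.

Lemma vnorm_unitv k t : 0 <= t -> vnorm (unitv k t) = t.
Proof.
move=> t0; apply: Rle_antisym.
  by apply: vnorm_le_bound => // j; rewrite /unitv; case: (j == k);
    rewrite ?Rabs_R0 ?Rabs_pos_eq; lra.
by have := Rabs_coord_le (unitv k t) k; rewrite /unitv eqxx Rabs_pos_eq.
Qed.

End Vectors.

Lemma invertible_mulmv_inverse n (C : mat n) : invertible C ->
  exists D : mat n, (forall x, mulmv D (mulmv C x) = x) /\ (forall y, mulmv C (mulmv D y) = y).
Proof.
move=> [D [CD DC]]; exists D.
by split => x; rewrite -mulmv_mulmm ?CD ?DC mul1mv.
Qed.

Lemma mulmv_intertwine n (I : Type) (P Q : I -> mat n) (C : mat n) :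
  (forall r, mulmm C (P r) = mulmm (Q r) C) ->
  forall x r, mulmv C (mulmv (P r) x) = mulmv (Q r) (mulmv C x).
Proof. by move=> comm x r; rewrite -!mulmv_mulmm comm. Qed.

Lemma mul_div_succ_le a e : 0 <= a -> 0 <= e -> a * (e / (a + 1)) <= e.
Proof.
move=> a0 e0; have : 0 <= e / (a + 1) by apply: Rle_mult_inv_pos; lra.
replace (a * (e / (a + 1))) with (e - e / (a + 1)) by (field; lra); lra.
Qed.

Section Frechet.
Variable n : nat.
Implicit Types (f g : vec n -> vec n) (x h : vec n) (A B L M : mat n).

Definition differentiable f : Prop := forall x, exists L, frechet_at f x L.

Lemma frechet_unique f x A B : frechet_at f x A -> frechet_at f x B -> A = B.
Proof.
move=> HA HB; apply: functional_extensionality => i; apply: functional_extensionality => k.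
apply: NNPP => AB; set d := Rabs (A i k - B i k).
have d0 : 0 < d by apply: Rabs_pos_lt => AB0; apply: AB; lra.
have [d1 [d1p H1]] := HA (d / 4) ltac:(lra).
have [d2 [d2p H2]] := HB (d / 4) ltac:(lra).
set t := Rmin d1 d2 / 2.
have t0 : 0 < t by rewrite /t; have := Rmin_glb_lt _ _ _ d1p d2p; lra.
have ut := vnorm_unitv k (Rlt_le _ _ t0).
have ut1 : vnorm (unitv k t) < d1 by rewrite ut /t; have := Rmin_l d1 d2; lra.
have ut2 : vnorm (unitv k t) < d2 by rewrite ut /t; have := Rmin_r d1 d2; lra.
(* Test both remainder estimates at h = unitv k t: their i-th coordinates differ by
   (A i k - B i k) t. *)
set D := f (vadd x (unitv k t)) i - f x i.
have RA : Rabs (D - A i k * t) <= d / 4 * t.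
  have := H1 _ ut1; rewrite ut; apply: Rle_trans.
  rewrite -(mulmv_unitv A); exact: Rabs_coord_le.
have RB : Rabs (D - B i k * t) <= d / 4 * t.
  have := H2 _ ut2; rewrite ut; apply: Rle_trans.
  rewrite -(mulmv_unitv B); exact: Rabs_coord_le.
have : Rabs ((A i k - B i k) * t) <= d / 2 * t.
  replace ((A i k - B i k) * t) with (- (D - A i k * t) + (D - B i k * t)) by ring.
  apply: Rle_trans (Rabs_triang _ _) _; rewrite Rabs_Ropp; lra.
rewrite Rabs_mult (Rabs_pos_eq t) -/d; [nra | lra].
Qed.

Lemma frechet_mulmv A x : frechet_at (mulmv A) x A.
Proof.
move=> eps eps0; exists 1; split => [|h _]; first lra.
have -> : vsub (vsub (mulmv A (vadd x h)) (mulmv A x)) (mulmv A h) = (fun _ => 0).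
  apply: functional_extensionality => i.
  by rewrite /vsub /mulmv /vadd -!sum_sub big1 // => j _; ring.
rewrite vnorm0; exact: Rmult_le_pos (Rlt_le _ _ eps0) (vnorm_ge0 h).
Qed.

Lemma frechet_id x : frechet_at id x (@idmat n).
Proof.
have -> : (@id (vec n)) = mulmv (@idmat n) by apply: functional_extensionality => y; rewrite mul1mv.
exact: frechet_mulmv.
Qed.

Lemma frechet_lipschitz g x B : frechet_at g x B ->
  exists d, 0 < d /\ forall h, vnorm h < d ->
    vnorm (vsub (g (vadd x h)) (g x)) <= (mnorm B + 1) * vnorm h.
Proof.
move=> HB; have [d [d0 Hd]] := HB 1 Rlt_0_1; exists d; split => // h hd.
rewrite -[vsub (g _) _](vadd_vsubK _ (mulmv B h)).
apply: Rle_trans (vnorm_add_le _ _) _.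
have := Hd h hd; have := vnorm_mulmv_le B h; lra.
Qed.

Lemma frechet_comp f g x A B :
  frechet_at g x B -> frechet_at f (g x) A -> frechet_at (fun y => f (g y)) x (mulmm A B).
Proof.
move=> HB HA eps eps0.
have nA0 := mnorm_ge0 A; have nB0 := mnorm_ge0 B.
set nA := mnorm A in nA0 *; set nB := mnorm B in nB0 *.
have [d1 [d1p Lip]] := frechet_lipschitz HB.
have [d2 [d2p H2]] := HB (eps / 2 / (nA + 1)) ltac:(apply: Rdiv_lt_0_compat; lra).
have [d3 [d3p H3]] := HA (eps / 2 / (nB + 1)) ltac:(apply: Rdiv_lt_0_compat; lra).
exists (Rmin (Rmin d1 d2) (d3 / (nB + 1))); split.
  by apply: Rmin_glb_lt; [apply: Rmin_glb_lt|apply: Rdiv_lt_0_compat; lra].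
move=> h /Rmin_Rgt [/Rmin_Rgt [h1 h2] h3].
have h0 := vnorm_ge0 h.
set k := vsub (g (vadd x h)) (g x).
have k1 : vnorm k <= (nB + 1) * vnorm h := Lip h h1.
have k3 : vnorm k < d3.
  apply: Rle_lt_trans k1 _.
  replace d3 with ((nB + 1) * (d3 / (nB + 1))) by (field; lra).
  by apply: Rmult_lt_compat_l; lra.
have -> : vsub (vsub (f (g (vadd x h))) (f (g x))) (mulmv (mulmm A B) h) =
   vadd (vsub (vsub (f (vadd (g x) k)) (f (g x))) (mulmv A k)) (mulmv A (vsub k (mulmv B h))).
  rewrite vadd_subrK mulmv_mulmm mulmv_sub; apply: functional_extensionality => i.
  by rewrite /vadd /vsub; ring.
apply: Rle_trans (vnorm_add_le _ _) _.
have T1 : eps / 2 / (nB + 1) * vnorm k <= eps / 2 * vnorm h.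
  apply: (@Rle_trans _ (eps / 2 / (nB + 1) * ((nB + 1) * vnorm h))).
    by apply: Rmult_le_compat_l => //; apply: Rle_mult_inv_pos; lra.
  by right; field; lra.
have T2 : vnorm (mulmv A (vsub k (mulmv B h))) <= eps / 2 * vnorm h.
  apply: Rle_trans (vnorm_mulmv_le _ _) _.
  apply: (@Rle_trans _ (nA * (eps / 2 / (nA + 1) * vnorm h))).
    exact: Rmult_le_compat_l nA0 (H2 h h2).
  rewrite -Rmult_assoc; apply: Rmult_le_compat_r h0 _; apply: mul_div_succ_le; lra.
have := H3 k k3; lra.
Qed.

Lemma frechet_inverse f g x L M :
  cancel f g -> cancel g f -> frechet_at f x L -> frechet_at g (f x) M ->
  mulmm L M = @idmat n /\ mulmm M L = @idmat n.
Proof.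
move=> fK gK HL HM; split.
- have HL' : frechet_at f (g (f x)) L by rewrite fK.
  have := frechet_comp HM HL'.
  have -> : (fun y => f (g y)) = id by apply: functional_extensionality.
  by move/frechet_unique; apply; apply: frechet_id.
- have := frechet_comp HL HM.
  have -> : (fun y => g (f y)) = id by apply: functional_extensionality.
  by move/frechet_unique; apply; apply: frechet_id.
Qed.

Lemma frechet0_intertwine f L P Q : frechet_at f (fun _ => 0) L ->
  (forall x, f (mulmv P x) = mulmv Q (f x)) -> mulmm L P = mulmm Q L.
Proof.
move=> HL conj; set z : vec n := fun _ => 0.
have HL' : frechet_at f (mulmv P z) L by rewrite mulmv0.
have := frechet_comp (frechet_mulmv P z) HL'.
have -> : (fun y => f (mulmv P y)) = (fun y => mulmv Q (f y)).
  by apply: functional_extensionality.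
by move/frechet_unique; apply; apply: frechet_comp HL (frechet_mulmv Q (f z)).
Qed.

End Frechet.

Lemma differentiable_conjugacy_linear n (I : Type) (P Q : I -> mat n) (f g : vec n -> vec n) :
  differentiable f -> differentiable g -> cancel f g -> cancel g f ->
  (forall x r, f (mulmv (P r) x) = mulmv (Q r) (f x)) ->
  exists C : mat n, invertible C /\ forall r, mulmm C (P r) = mulmm (Q r) C.
Proof.
move=> Df Dg fK gK conj.
have [L HL] := Df (fun _ => 0); have [M HM] := Dg (f (fun _ => 0)).
exists L; split; first by exists M; exact: frechet_inverse fK gK HL HM.
by move=> r; apply: frechet0_intertwine HL _ => x; apply: conj.
Qed.

Definition unit_mindex n (k : 'I_n) : 'I_n -> nat := fun j => if j == k then 1%N else 0%N.

Section MultiIndices.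
Variables n K : nat.
Hypothesis K_gt0 : (0 < K)%N.
Implicit Type a : {ffun 'I_n -> 'I_K.+1}.

Definition deg a : nat := (\sum_(k < n) nat_of_ord (a k))%N.
Definition zero_mindex : {ffun 'I_n -> 'I_K.+1} := [ffun _ => ord0].
Definition unit_ffindex (k : 'I_n) : {ffun 'I_n -> 'I_K.+1} :=
  [ffun j => if j == k then inord 1 else ord0].

Lemma unit_ffindexE k j : nat_of_ord (unit_ffindex k j) = unit_mindex k j.
Proof. by rewrite /unit_ffindex /unit_mindex ffunE; case: (j == k) => //=; rewrite inordK. Qed.

Lemma deg_unit_ffindex k : deg (unit_ffindex k) = 1%N.
Proof.
rewrite /deg (bigD1 k) //= unit_ffindexE /unit_mindex eqxx big1 // => j /negbTE jk.
by rewrite unit_ffindexE /unit_mindex jk.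
Qed.

Lemma deg_eq0 a : (deg a == 0)%N = (a == zero_mindex).
Proof.
rewrite /deg sum_nat_eq0; apply/forallP/eqP => [a0|->] /=.
  by apply/ffunP => j; apply/val_inj; rewrite ffunE /=; apply/eqP/a0.
by move=> j; rewrite ffunE.
Qed.

Lemma deg_zero_mindex : deg zero_mindex = 0%N.
Proof. by rewrite /deg big1 // => j _; rewrite ffunE. Qed.

Lemma unit_ffindex_inj : injective unit_ffindex.
Proof.
move=> k l /(congr1 (fun a => nat_of_ord (a k))); rewrite !unit_ffindexE /unit_mindex eqxx.
by case: eqP.
Qed.

Lemma deg_eq1 a : (deg a == 1)%N = (a \in unit_ffindex @: [set: 'I_n]).
Proof.
apply/eqP/imsetP => [a1|[k _ ->]]; last exact: deg_unit_ffindex.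
have [k ak|a0] := pickP (fun k => (0 < a k)%N); last first.
  by move: a1; rewrite /deg big1 // => k _; have := a0 k; case: (nat_of_ord (a k)).
exists k; rewrite ?in_setT //; move: a1; rewrite /deg (bigD1 k) //= => a1.
have ak1 : nat_of_ord (a k) = 1%N.
  by apply/eqP; rewrite eqn_leq ak andbT -a1 leq_addr.
move: a1; rewrite ak1 add1n => /eqP; rewrite eqSS sum_nat_eq0 => /forallP a0.
apply/ffunP => j; apply/val_inj; rewrite /= unit_ffindexE /unit_mindex.
by case: eqP => [->//|/eqP jk]; have := a0 j; rewrite jk => /eqP.
Qed.

Lemma sum_mindex_split (F : ('I_n -> nat) -> R) :
  \big[Rplus/0]_(a | (deg a <= K)%N) F (fun k => nat_of_ord (a k))
  = F (fun _ => 0%N) + \big[Rplus/0]_(k < n) F (unit_mindex k)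
    + \big[Rplus/0]_(a | (deg a <= K)%N && (1 < deg a)%N) F (fun k => nat_of_ord (a k)).
Proof.
rewrite (bigID (fun a => (deg a <= 1)%N)) /=.
under [X in _ + X = _]eq_bigl => a do rewrite -ltnNge.
congr (_ + _); rewrite (bigID (fun a => (deg a == 0)%N)) /=.
rewrite (big_pred1 zero_mindex); last first.
  move=> a /=; rewrite deg_eq0 andbC; case: (boolP (a == zero_mindex)) => //= /eqP ->.
  by rewrite deg_zero_mindex.
have -> : (fun k => nat_of_ord (zero_mindex k)) = (fun _ => 0%N).
  by apply: functional_extensionality => j; rewrite ffunE.
congr (_ + _).
have -> : \big[Rplus/0]_(k < n) F (unit_mindex k)
    = \big[Rplus/0]_(a in unit_ffindex @: [set: 'I_n]) F (fun k => nat_of_ord (a k)).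
  rewrite big_imset /=; last by move=> k l _ _; apply: unit_ffindex_inj.
  rewrite [RHS]big_mkcond /=; apply: eq_bigr => k _; rewrite in_setT.
  by congr F; apply: functional_extensionality => j; rewrite unit_ffindexE.
apply: eq_bigl => a; rewrite -deg_eq1 /=.
by case: (deg a) => [|[|d]] //=; rewrite ?andbF // !andbT; apply: K_gt0.
Qed.
End MultiIndices.

Section PowerSeries.
Variable n : nat.
Implicit Types (h : vec n) (a : 'I_n -> nat) (c : ('I_n -> nat) -> vec n).

Lemma monom0 h : monom (fun _ => 0%N) h = 1.
Proof. by rewrite /monom big1. Qed.

Lemma monom_unit_mindex k h : monom (unit_mindex k) h = h k.
Proof.
rewrite /monom (bigD1 k) //= /unit_mindex eqxx big1 /=; first ring.
by move=> j /negbTE ->.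
Qed.

Lemma monom_const a t : monom a (fun _ => t) = t ^ (\sum_(k < n) a k)%N.
Proof. by rewrite /monom; elim/big_rec2: _ => [|i y1 y2 _ ->] //; rewrite pow_add. Qed.

Lemma Rabs_monom_le a h : Rabs (monom a h) <= vnorm h ^ (\sum_(k < n) a k)%N.
Proof.
rewrite /monom; elim/big_rec2: _ => [|i y1 y2 _ IH]; first by rewrite Rabs_R1 /=; lra.
rewrite pow_add Rabs_mult -RPow_abs.
apply: Rmult_le_compat; [apply: pow_le; apply: Rabs_pos | apply: Rabs_pos | | exact: IH].
by apply: pow_incr; split; [apply: Rabs_pos | apply: Rabs_coord_le].
Qed.

Lemma pow_le_sq_mul v s m : 0 <= v <= s -> 0 < s -> (2 <= m)%N ->
  v ^ m <= (v / s) ^ 2 * s ^ m.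
Proof.
move=> vs s0 m2; rewrite -(subnKC m2) !pow_add.
have -> : (v / s) ^ 2 * (s ^ 2 * s ^ (m - 2)) = v ^ 2 * s ^ (m - 2) by field; lra.
by apply: Rmult_le_compat_l; [apply: pow_le; lra | apply: pow_incr].
Qed.

Lemma Rabs_monom_le_sq a h s : 0 < s -> vnorm h <= s -> (2 <= \sum_(k < n) a k)%N ->
  Rabs (monom a h) <= (vnorm h / s) ^ 2 * monom a (fun _ => s).
Proof.
move=> s0 hs a2; rewrite monom_const; apply: Rle_trans (Rabs_monom_le a h) _.
by apply: pow_le_sq_mul => //; split; [apply: vnorm_ge0 | ].
Qed.

Definition lin_part c : mat n := fun i k => c (unit_mindex k) i.

Lemma psum_remainder_le c x0 h s K i : (0 < K)%N -> 0 < s -> vnorm h <= s ->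
  Rabs (psum c x0 (vadd x0 h) K i - c (fun _ => 0%N) i - mulmv (lin_part c) h i)
  <= (vnorm h / s) ^ 2 * psum_abs c x0 (vadd x0 (fun _ => s)) K i.
Proof.
move=> K0 s0 hs; rewrite /psum /psum_abs !vsub_vaddK.
rewrite (sum_mindex_split K0 (fun a => c a i * monom a h)).
rewrite (sum_mindex_split K0 (fun a => Rabs (c a i * monom a (fun _ => s)))).
rewrite monom0 Rmult_1_r /mulmv /lin_part.
have -> : \big[Rplus/0]_(k < n) (c (unit_mindex k) i * monom (unit_mindex k) h)
    = \big[Rplus/0]_(k < n) (c (unit_mindex k) i * h k).
  by apply: eq_bigr => k _; rewrite monom_unit_mindex.
set S1 := \big[Rplus/0]_(k < n) _; set R2 := \big[Rplus/0]_(a | _) _.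
replace (c (fun _ => 0%N) i + S1 + R2 - c (fun _ => 0%N) i - S1) with R2 by ring.
set T0 := Rabs (c (fun _ => 0%N) i * _); set T1 := \big[Rplus/0]_(k < n) _.
set T2 := \big[Rplus/0]_(a | _) _.
have T0p : 0 <= T0 by apply: Rabs_pos.
have T1p : 0 <= T1 by apply: sum_ge0 => *; apply: Rabs_pos.
have q0 : 0 <= (vnorm h / s) ^ 2 by apply: pow2_ge_0.
apply: (@Rle_trans _ ((vnorm h / s) ^ 2 * T2)); last by nra.
rewrite /R2 /T2 sum_mull; apply: Rle_trans (Rabs_sum_le _ _ _) _.
apply: sum_le => a /andP [_ a2]; rewrite !Rabs_mult.
rewrite (Rabs_pos_eq (monom _ (fun _ => s))); last by rewrite monom_const; apply: pow_le; lra.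
have := Rabs_monom_le_sq (a := fun k => nat_of_ord (a k)) s0 hs a2.
have := Rabs_pos (c (fun k => nat_of_ord (a k)) i); nra.
Qed.

End PowerSeries.

Lemma cv_dist_le (u : nat -> R) l a b :
  Un_cv u l -> (forall K, (0 < K)%N -> Rabs (u K - a) <= b) -> Rabs (l - a) <= b.
Proof.
move=> ul ub; apply: Rnot_lt_le => lab.
have [N HN] := ul (Rabs (l - a) - b) ltac:(lra).
have := HN N.+1 ltac:(lia); have := ub N.+1 isT; rewrite /Rdist => H1 H2.
have := Rabs_triang (l - u N.+1) (u N.+1 - a).
replace (l - u N.+1 + (u N.+1 - a)) with (l - a) by ring.
rewrite -Rabs_Ropp Ropp_minus_distr in H2; lra.
Qed.

Lemma frechet_of_quadratic_bound n (f : vec n -> vec n) x0 (a : vec n) L s K : 0 < s ->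
  (forall h, vnorm h <= s ->
     vnorm (vsub (vsub (f (vadd x0 h)) a) (mulmv L h)) <= K * vnorm h ^ 2) ->
  frechet_at f x0 L.
Proof.
move=> s0 fq.
have fx0 : f x0 = a.
  have := fq (fun _ => 0); rewrite vnorm0 vaddv0 mulmv0 => /(_ ltac:(lra)) f0.
  apply: functional_extensionality => i.
  have := Rle_trans _ _ _ (Rabs_coord_le _ i) f0.
  rewrite /vsub (_ : K * 0 ^ 2 = 0); last ring.
  by split_Rabs; lra.
move=> eps eps0; exists (Rmin s (eps / (Rabs K + 1))); split.
  by apply: Rmin_glb_lt => //; apply: Rdiv_lt_0_compat => //; have := Rabs_pos K; lra.
move=> h /Rmin_Rgt [hs hK]; rewrite fx0; apply: Rle_trans (fq h (Rlt_le _ _ hs)) _.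
have h0 := vnorm_ge0 h; have := Rle_abs K; have K1 : 0 < Rabs K + 1 by have := Rabs_pos K; lra.
have : (Rabs K + 1) * vnorm h <= eps.
  replace eps with ((Rabs K + 1) * (eps / (Rabs K + 1))) by (field; lra).
  by apply: Rmult_le_compat_l; lra.
nra.
Qed.

Lemma analytic_differentiable n (f : vec n -> vec n) : analytic f -> differentiable f.
Proof.
move=> fan x0; have [r [c [r0 fc]]] := fan x0.
set s := r / 2; have s0 : 0 < s by rewrite /s; lra.
(* The absolute partial sums at the corner x0 + (s, ..., s) bound the whole remainder *)
set y := vadd x0 (fun _ => s).
have yr : vnorm (vsub y x0) < r.
  rewrite vsub_vaddK; apply: Rle_lt_trans (vnorm_const_le n (Rlt_le _ _ s0)) _; rewrite /s; lra.
have /fin_all_exists [m ym] : forall i, exists m : R, forall K, psum_abs c x0 y K i <= m.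
  move=> i; have [m mb] := proj2 (fc y yr i).
  by exists m => K; apply: mb; exists K.
set M := \big[Rmax/0]_(i < n) m i.
have mM i : m i <= M by apply: (bigmax_ge m); rewrite mem_index_enum.
exists (lin_part c).
apply: (frechet_of_quadratic_bound (a := c (fun _ => 0%N)) (K := M / s ^ 2) s0).
move=> h hs; apply: vnorm_le_bound => [|i].
  apply: Rmult_le_pos; last exact: pow2_ge_0.
  by apply: Rle_mult_inv_pos; [apply: bigmax_ge0 | apply: pow_lt].
have hr : vnorm (vsub (vadd x0 h) x0) < r by rewrite vsub_vaddK /s in hs *; lra.
rewrite /vsub -Rminus_plus_distr.
apply: (cv_dist_le (proj1 (fc _ hr i))) => K K0; rewrite Rminus_plus_distr.
apply: Rle_trans (psum_remainder_le c x0 i K0 s0 hs) _.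
have -> : M / s ^ 2 * vnorm h ^ 2 = (vnorm h / s) ^ 2 * M by field; lra.
apply: Rmult_le_compat_l; first exact: pow2_ge_0.
exact: Rle_trans (ym i K) (mM i).
Qed.

Lemma C1_mulmv n (C : mat n) : C1 (mulmv C).
Proof.
exists (fun _ => C); split => [x|x eps eps0]; first exact: frechet_mulmv.
by exists 1; split => [|y _ i j]; rewrite ?Rminus_diag ?Rabs_R0; lra.
Qed.

Section LinearAnalytic.
Variables (n : nat) (C : mat n) (x0 : vec n).

(* The Taylor coefficients of x |-> C x at x0; on unit_mindex k the sum below is C i k. *)
Definition linear_coef (a : 'I_n -> nat) : vec n := fun i =>
  if (\sum_(k < n) a k == 0)%N then mulmv C x0 i
  else if (\sum_(k < n) a k == 1)%N then \big[Rplus/0]_(k < n) (INR (a k) * C i k) else 0.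

Lemma linear_coef0 i : linear_coef (fun _ => 0%N) i = mulmv C x0 i.
Proof. by rewrite /linear_coef big1_eq. Qed.

Lemma sum_unit_mindex (k : 'I_n) : (\sum_(j < n) unit_mindex k j)%N = 1%N.
Proof. by rewrite (bigD1 k) //= /unit_mindex eqxx big1 // => j /negbTE ->. Qed.

Lemma linear_coef_unit k i : linear_coef (unit_mindex k) i = C i k.
Proof.
rewrite /linear_coef sum_unit_mindex /= (bigD1 k) //= {1}/unit_mindex eqxx big1 /=; first ring.
by move=> j /negbTE jk; rewrite /unit_mindex jk /=; ring.
Qed.

Lemma psum_linear x K i (F : R -> R) : (0 < K)%N -> F 0 = 0 ->
  \big[Rplus/0]_(a : {ffun 'I_n -> 'I_K.+1} | (deg a <= K)%N)
     F (linear_coef (fun k => nat_of_ord (a k)) i * monom (fun k => nat_of_ord (a k)) (vsub x x0))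
  = F (mulmv C x0 i) + \big[Rplus/0]_(k < n) F (C i k * vsub x x0 k).
Proof.
move=> K0 F0; rewrite (sum_mindex_split K0 (fun a => F (linear_coef a i * monom a (vsub x x0)))).
rewrite linear_coef0 monom0 Rmult_1_r [X in _ + X = _]big1 ?Rplus_0_r; last first.
  move=> a /andP [_ a2]; rewrite /linear_coef -/(deg a) ifN ?ifN ?Rmult_0_l //.
    by rewrite neq_ltn a2 orbT.
  by rewrite -lt0n ltnW.
by congr (_ + _); apply: eq_bigr => k _; rewrite linear_coef_unit monom_unit_mindex.
Qed.

Lemma psum_linear_coef x K i : (0 < K)%N -> psum linear_coef x0 x K i = mulmv C x i.
Proof.
move=> K0; rewrite /psum (@psum_linear x K i id K0 erefl) /=.
change (\big[Rplus/0]_(k < n) (C i k * vsub x x0 k)) with (mulmv C (vsub x x0) i).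
by rewrite mulmv_sub /vsub; ring.
Qed.

End LinearAnalytic.

Lemma analytic_mulmv n (C : mat n) : analytic (mulmv C).
Proof.
move=> x0; exists 1, (linear_coef C x0); split => [|x _ i]; first lra.
split.
  move=> eps eps0; exists 1%N => K K1; rewrite psum_linear_coef; last by apply/ltP; lia.
  by rewrite /Rdist Rminus_diag Rabs_R0.
exists (Rmax (psum_abs (linear_coef C x0) x0 x 0 i)
  (Rabs (mulmv C x0 i) + \big[Rplus/0]_(k < n) Rabs (C i k * vsub x x0 k))).
move=> _ [[|K] ->]; first exact: Rmax_l.
apply: (Rle_trans _ _ _ _ (Rmax_r _ _)).
by rewrite /psum_abs (@psum_linear _ C x0 x K.+1 i Rabs isT Rabs_R0); right.
Qed.

Lemma C1_differentiable n (f : vec n -> vec n) : C1 f -> differentiable f.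
Proof. by move=> [Df [fD _]] x; exists (Df x). Qed.

Theorem theorem9p3 (n : nat) (I : Type) (P Q : I -> mat n)
  (HP : forall r, invertible (P r)) (HQ : forall r, invertible (Q r)) :
  ((exists f : vec n -> vec n, C1_diffeo f /\
       forall (x : vec n) (r : I), f (mulmv (P r) x) = mulmv (Q r) (f x))
   <-> (exists C : mat n, invertible C /\
       forall r : I, mulmm C (P r) = mulmm (Q r) C))
  /\
  ((exists f : vec n -> vec n, analytic_diffeo f /\
       forall (x : vec n) (r : I), f (mulmv (P r) x) = mulmv (Q r) (f x))
   <-> (exists C : mat n, invertible C /\
       forall r : I, mulmm C (P r) = mulmm (Q r) C)).
Proof.
split; split.
- move=> [f [[g [fK [gK [Cf Cg]]]] conj]].
  exact: differentiable_conjugacy_linear (C1_differentiable Cf) (C1_differentiable Cg) fK gK conj.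
- move=> [C [/invertible_mulmv_inverse [D [CK DK]] comm]].
  exists (mulmv C); split; last exact: mulmv_intertwine.
  by exists (mulmv D); do !split => //; apply: C1_mulmv.
- move=> [f [[g [fK [gK [Af Ag]]]] conj]].
  exact: differentiable_conjugacy_linear
    (analytic_differentiable Af) (analytic_differentiable Ag) fK gK conj.
- move=> [C [/invertible_mulmv_inverse [D [CK DK]] comm]].
  exists (mulmv C); split; last exact: mulmv_intertwine.
  by exists (mulmv D); do !split => //; apply: analytic_mulmv.
Qed.
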